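(* Let $q>1$ and $0<u<1$. Consider the following random procedure (Affine Young Tableau Algorithm). Step 1 (Young Tableau Algorithm): start with $N=1$ and $\lambda$ the empty partition, and independent coins indexed by $i\ge1$, coin $i$ showing heads with probability $u/q^i$. Repeatedly flip coin $N$: if tails, set $N\leftarrow N+1$; if heads, choose a column $S$ with $\Pr(S=1)=\frac{q^{N-\lambda'_1}-1}{q^N-1}$ and $\Pr(S=s)=\frac{q^{N-\lambda'_s}-q^{N-\lambda'_{s-1}}}{q^N-1}$ for $s>1$, add one box to column $S$ of $\lambda$, and flip coin $N$ again. Let $\lambda$ be the resulting partition (the limit of this process). Step 2: choose $S$ with $\Pr(S=1)=q^{-\lambda'_1}$ and $\Pr(S=s)=q^{-\lambda'_s}-q^{-\lambda'_{s-1}}$ for $s>1$, and add one box to column $S$ of $\lambda$. Then the output partition is distributed according to $N_{u,q}$.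
   Context: For a partition $\lambda$, $\lambda'_s$ denotes the length of column $s$ of its diagram (the $s$-th part of the conjugate partition; $\lambda'_s=0$ beyond the last column); ''adding a box to column $s$'' increases $\lambda'_s$ by one (the stated probabilities vanish whenever this would not give a partition). $N_{u,q}(\lambda)=\prod_{r\ge1}(1-u/q^r)\frac{u^{|\lambda|-1}(q^{\lambda'_1}-1)}{\prod_i q^{(\lambda'_i)^2}(\frac1q)_{m_i(\lambda)}}$ for partitions $\lambda$ of positive integers, where $m_i(\lambda)$ is the multiplicity of part $i$ and $(\frac1q)_i=\prod_{j=1}^i(1-q^{-j})$. *)

From HB Require Import structures.
From mathcomp Require Import all_boot all_order all_algebra.
From mathcomp Require Import all_classical all_reals all_analysis.
Set Implicit Arguments. Unset Strict Implicit. Unset Printing Implicit Defensive.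
Import Order.TTheory GRing.Theory Num.Theory.
Local Open Scope ring_scope.

(* A partition is represented by its sequence of parts, nonincreasing and
   positive (canonical representation, so Leibniz equality = equality of
   partitions). *)
Definition is_partition (l : seq nat) : bool :=
  sorted geq l && all (fun p => 0 < p)%N l.

Definition psize (l : seq nat) : nat := sumn l.

(* lambda'_s = length of column s (s >= 1); 0 beyond the last column. *)
Definition col (l : seq nat) (s : nat) : nat := count (fun p => s <= p)%N l.

Definition ncols (l : seq nat) : nat := head 0%N l.

Definition mult (l : seq nat) (i : nat) : nat := count (pred1 i) l.

(* Adding a box to column s (s >= 1): the row of index lambda'_s (0-based)
   gets length s (it had length s-1, or did not exist when s = 1).  This is
   a partition whenever s = 1 or lambda'_{s-1} > lambda'_s; in the other
   cases the probabilities below vanish. *)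
Definition add_box (l : seq nat) (s : nat) : seq nat := set_nth 0%N l (col l s) s.

Section Algo.
Variables (R : realType) (q u : R).

Definition yta_colprob (N : nat) (l : seq nat) (s : nat) : R :=
  if s == 1%N then (q ^+ N / q ^+ col l 1 - 1) / (q ^+ N - 1)
  else (q ^+ N / q ^+ col l s - q ^+ N / q ^+ col l s.-1) / (q ^+ N - 1).

Definition step2_colprob (l : seq nat) (s : nat) : R :=
  if s == 1%N then (q ^+ col l 1)^-1
  else (q ^+ col l s)^-1 - (q ^+ col l s.-1)^-1.

Definition coin (N : nat) : R := u / q ^+ N.

(* Columns s > ncols l + 1 have probability 0 and are omitted. *)
Definition yta_step (x : (nat * seq nat) * R) : seq ((nat * seq nat) * R) :=
  let: ((N, l), w) := x in
  ((N.+1, l), w * (1 - coin N)) ::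
  [seq ((N, add_box l s), w * coin N * yta_colprob N l s) | s <- iota 1 (ncols l).+1].

(* Distribution (finitely supported, as a weighted list of states) of the
   state (N, lambda) after t flips, starting from N = 1, lambda = empty. *)
Fixpoint yta_dist (t : nat) : seq ((nat * seq nat) * R) :=
  if t is t'.+1 then flatten [seq yta_step x | x <- yta_dist t'] else [:: ((1%N, [::]), 1)].

Definition ayta_prob (t : nat) (nu : seq nat) : R :=
  \sum_(x <- yta_dist t)
     \sum_(s <- iota 1 (ncols x.1.2).+1)
        (add_box x.1.2 s == nu)%:R * x.2 * step2_colprob x.1.2 s.

Definition qpoch (i : nat) : R := \prod_(1 <= j < i.+1) (1 - (q ^+ j)^-1).

Definition inf_prod : R := limn (fun n => \prod_(1 <= r < n.+1) (1 - u / q ^+ r)).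

(* N_{u,q}(lambda); the product over i >= 1 is finite since the factors are
   1 for i > lambda_1. *)
Definition Nuq (l : seq nat) : R :=
  inf_prod * (u ^+ (psize l).-1 * (q ^+ col l 1 - 1)) /
  \prod_(1 <= i < (ncols l).+1) (q ^+ ((col l i) ^ 2) * qpoch (mult l i)).

End Algo.

(* After t flips, the state (N, l) of Step 1 satisfies N + |l| = t + 1, since every flip either
   increments N or adds a box, and its law has the closed form
     Pr(N, l) = prod_(1 <= r < N) (1 - u/q^r) * prod_(0 <= j < l'_1) (1 - q^(j-N)) * w(l),
     w(l) = u^|l| / prod_i q^((l'_i)^2) (1/q)_(m_i(l)).
   This is proved by induction on t from the forward equation: the last flip was either tails from
   (N-1, l) or added the corner box of some column s of l.  If l^- is l without that box and p2 is
   the column law of Step 2, then w(l^-) * p2(l^-, s) = w(l) * (q^(l'_s) - q^(l'_(s+1))) / u, so the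
   corner contributions telescope to (q^(l'_1) - 1)/(q^N - 1) times the closed form, which is
   exactly what the tails contribution misses.  The same telescoping over the corners of nu
   evaluates Step 2.  As t -> oo with nu fixed, N -> oo, so the first product tends to
   prod_(r >= 1) (1 - u/q^r) and the second to 1, which leaves N_{u,q}(nu). *)

From Pilot Require Import Defs.
From HB Require Import structures.
From mathcomp Require Import all_boot all_order all_algebra.
From mathcomp Require Import all_classical all_reals all_analysis.
From mathcomp Require Import zify ring.
Import Order.TTheory GRing.Theory Num.Theory numFieldNormedType.Exports.
(* [all_algebra] exports the matrix column [col]; re-importing [Defs] restores partition columns. *)
Import Pilot.Defs.

Set Implicit Arguments. Unset Strict Implicit. Unset Printing Implicit Defensive.

(** * Columns of partitions *)

Lemma is_partitionP l : reflect
  ((forall i, i.+1 < size l -> nth 0 l i.+1 <= nth 0 l i) /\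
   (forall i, i < size l -> 0 < nth 0 l i)) (is_partition l).
Proof.
apply: (iffP andP) => [[/sortedP sl /all_nthP pl]|[sl pl]]; split.
- by move=> i /(sl 0).
- by move=> i /(pl 0).
- exact/(sortedP 0).
- exact/(all_nthP 0).
Qed.

Lemma ltn_col l j i : sorted geq l -> 0 < j -> (i < col l j) = (j <= nth 0 l i).
Proof.
elim: l i => [|a l IHl] i /= sl j_gt0; first by rewrite nth_nil; case: j j_gt0.
have le_la : all (geq a) l.
  by apply: (order_path_min (leT := geq)) => // x y z /= yx zy; apply: leq_trans zy yx.
case: (leqP j a) => ja.
  by case: i => [|i] /=; rewrite ?ja // add1n ltnS IHl // (path_sorted sl).
have -> : col l j = 0.
  apply/eqP; rewrite -leqn0 leqNgt -has_count; apply/hasP => -[x lx /= jx].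
  by have := allP le_la x lx; rewrite /=; lia.
case: i => [|i] /=; first by apply/esym/negbTE; rewrite -ltnNge.
apply/esym/negbTE; rewrite -ltnNge.
have [il|li] := ltnP i (size l); last by rewrite nth_default.
by have := all_nthP 0 le_la i il; rewrite /=; lia.
Qed.

Lemma col_from_nth l j c : sorted geq l -> 0 < j ->
  (forall i, (i < c) = (j <= nth 0 l i)) -> col l j = c.
Proof.
move=> sl j_gt0 ltc; have E i : (i < col l j) = (i < c) by rewrite ltc ltn_col.
by have := E c; have := E (col l j); rewrite !ltnn; lia.
Qed.

Lemma leq_col l j j' : j <= j' -> col l j' <= col l j.
Proof. by move=> jj'; apply: sub_count => x /=; lia. Qed.

Lemma col_le_size l j : col l j <= size l.
Proof. exact: count_size. Qed.

Lemma col1E l : is_partition l -> col l 1 = size l.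
Proof. by case/andP=> _ pos; apply/eqP; rewrite -all_count. Qed.

Lemma col_gt0 l j : is_partition l -> 0 < j -> (0 < col l j) = (j <= ncols l).
Proof. by case/andP=> sl _ j_gt0; rewrite ltn_col //; case: l {sl}. Qed.

Lemma col_gt_ncols l j : is_partition l -> ncols l < j -> col l j = 0.
Proof. by move=> pl jl; apply/eqP; rewrite -leqn0 leqNgt col_gt0 //; lia. Qed.

Lemma partition_col_inj l1 l2 : is_partition l1 -> is_partition l2 ->
  (forall j, 0 < j -> col l1 j = col l2 j) -> l1 = l2.
Proof.
move=> pl1 pl2 E; have size12 : size l1 = size l2 by rewrite -!col1E // E.
apply: (eq_from_nth (x0 := 0)) => // i i1; have i2 : i < size l2 by rewrite -size12.
have /is_partitionP[_ pos1] := pl1; have /is_partitionP[_ pos2] := pl2.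
have E' j : 0 < j -> (j <= nth 0 l1 i) = (j <= nth 0 l2 i).
  by move=> j_gt0; case/andP: pl1 => s1 _; case/andP: pl2 => s2 _; rewrite -!ltn_col // E.
apply/eqP; rewrite eqn_leq; apply/andP; split.
- by rewrite -(E' _ (pos1 i i1)).
- by rewrite (E' _ (pos2 i i2)).
Qed.

(** * Adding and removing a box *)

Definition addable (l : seq nat) (s : nat) : bool := (s == 1) || (col l s < col l s.-1).
Definition corner (l : seq nat) (s : nat) : bool := (0 < s) && (col l s.+1 < col l s).

(* The last box of column [s] sits in row [(col l s).-1]; when [s = 1] that row disappears. *)
Definition rem_box (l : seq nat) (s : nat) : seq nat :=
  mkseq (fun i => if i == (col l s).-1 then s.-1 else nth 0 l i)
        (if s == 1 then (col l s).-1 else size l).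

Lemma nth_add_box l s i : nth 0 (add_box l s) i = if i == col l s then s else nth 0 l i.
Proof. by rewrite nth_set_nth. Qed.

Lemma sumn_set_nth l p s : sumn (set_nth 0 l p s) + nth 0 l p = sumn l + s.
Proof.
elim: l p => [|a l IHl] [|p] /=; try lia.
- by elim: p => [|p IHp] /=; lia.
- by have := IHl p; lia.
Qed.

Section AddBox.
Variables (l : seq nat) (s : nat).
Hypotheses (pl : is_partition l) (s_gt0 : 0 < s) (al : addable l s).

Let sl : sorted geq l. Proof. by case/andP: pl. Qed.

Let ge_below i : i < col l s -> s <= nth 0 l i.
Proof. by rewrite ltn_col. Qed.

Let lt_above i : col l s <= i -> nth 0 l i < s.
Proof. by move=> si; rewrite ltnNge -ltn_col // -leqNgt. Qed.

Let add_row_s1 : s = 1 -> col l s = size l.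
Proof. by move->; rewrite col1E. Qed.

Let add_row_gt1 : 1 < s -> col l s < size l /\ nth 0 l (col l s) = s.-1.
Proof.
move=> s_gt1; move: al; rewrite /addable gtn_eqF //= => lt_col.
split; first exact: leq_trans lt_col (col_le_size _ _).
by have := lt_above (leqnn _); move: lt_col; rewrite ltn_col //; lia.
Qed.

Let size_add_box : size (add_box l s) = if s == 1 then (size l).+1 else size l.
Proof.
rewrite /add_box size_set_nth; case: eqP => [/add_row_s1|s_neq1]; first lia.
have s_gt1 : 1 < s by lia.
by have [lt_size _] := add_row_gt1 s_gt1; lia.
Qed.

Lemma add_box_partition : is_partition (add_box l s).
Proof.
have /is_partitionP[dec pos] := pl.
apply/is_partitionP; split => i; rewrite size_add_box => i_lt; rewrite !nth_add_box.
- case: (eqVneq i.+1 (col l s)) => [Ei1|Ni1].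
    by rewrite (_ : i == _ = false) ?ge_below; lia.
  case: (eqVneq i (col l s)) => [Ei|Ni]; first by apply/ltnW/lt_above; lia.
  by apply: dec; move: i_lt; case: eqP => [/add_row_s1|]; lia.
- case: eqP => // Ni; apply: pos.
  by move: i_lt; case: eqP => [/add_row_s1|]; lia.
Qed.

Lemma col_add_box j : 0 < j -> col (add_box l s) j = col l j + (j == s).
Proof.
move=> j_gt0; case/andP: add_box_partition => sl' _.
apply: col_from_nth => // i; rewrite nth_add_box.
case: (eqVneq i (col l s)) => [->|Ni]; last first.
  rewrite -ltn_col //; case: (eqVneq j s) => [->|]; last by rewrite addn0.
  by rewrite addn1 ltnS leq_eqVlt (negbTE Ni).
case: (ltngtP j s) => [js|sj|->]; rewrite ?addn0; last by rewrite addn1 ltnSn.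
- move: al; rewrite /addable gtn_eqF /=; last by lia.
  by move/leq_trans; apply; apply: leq_col; lia.
- by apply/negbTE; rewrite -leqNgt leq_col // ltnW.
Qed.

Lemma corner_add_box : corner (add_box l s) s.
Proof.
rewrite /corner s_gt0 !col_add_box // eqxx (gtn_eqF (ltnSn s)).
by have := leq_col l (leqnSn s); lia.
Qed.

Lemma psize_add_box : psize (add_box l s) = (psize l).+1.
Proof.
move: (sumn_set_nth l (col l s) s); rewrite /psize -/(add_box l s).
case: (eqVneq s 1) => [s1|s_neq1].
  by rewrite nth_default ?add_row_s1 // s1; lia.
have s_gt1 : 1 < s by lia.
by have [_ ->] := add_row_gt1 s_gt1; lia.
Qed.

End AddBox.

Section RemBox.
Variables (l : seq nat) (s : nat).
Hypotheses (pl : is_partition l) (cs : corner l s).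

Let sl : sorted geq l. Proof. by case/andP: pl. Qed.
Let s_gt0 : 0 < s. Proof. by case/andP: cs. Qed.
Let r := (col l s).-1.
Let colE : col l s = r.+1. Proof. by case/andP: cs; rewrite /r; lia. Qed.
Let col_succ_le : col l s.+1 <= r. Proof. by case/andP: cs; rewrite colE. Qed.

Let ge_upto i : i <= r -> s <= nth 0 l i.
Proof. by rewrite -ltn_col // colE. Qed.

Let lt_below i : r < i -> nth 0 l i < s.
Proof. by move=> ri; rewrite ltnNge -ltn_col // colE; lia. Qed.

Let r_lt_size : r < size l.
Proof. by have := col_le_size l s; lia. Qed.

Let sz := if s == 1 then r else size l.

Let nth_rem_box i :
  nth 0 (rem_box l s) i = if i < sz then (if i == r then s.-1 else nth 0 l i) else 0.
Proof.
case: ifP => isz; first by rewrite nth_mkseq.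
by rewrite nth_default // size_mkseq leqNgt isz.
Qed.

Lemma rem_box_partition : is_partition (rem_box l s).
Proof.
have /is_partitionP[dec pos] := pl.
have sz_le : sz <= size l by have := r_lt_size; rewrite /sz; case: eqP; lia.
apply/is_partitionP; split => i; rewrite size_mkseq -/sz => i_lt; rewrite !nth_rem_box.
- rewrite i_lt (ltn_trans (ltnSn i) i_lt).
  case: (eqVneq i.+1 r) => [Ei1|Ni1].
    by rewrite (_ : i == r = false); [have := ge_upto (i := i) | ]; lia.
  case: (eqVneq i r) => [Ei|Ni]; first by have := lt_below (i := i.+1); lia.
  by apply: dec; lia.
- rewrite i_lt; case: (eqVneq i r) => [Ei|Ni]; last by apply: pos; lia.
  by move: i_lt; rewrite /sz; case: eqP; lia.
Qed.

Lemma col_rem_box j : 0 < j -> col (rem_box l s) j = col l j - (j == s).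
Proof.
move=> j_gt0; case/andP: rem_box_partition => sl' _.
apply: col_from_nth => // i; rewrite nth_rem_box.
have le_succ := leq_col l (leqnSn s).
case: ifP => i_sz; last first.
  rewrite (_ : j <= 0 = false); last by lia.
  move: i_sz; rewrite /sz; case: eqP => [s1|_] i_sz; last by have := col_le_size l j; lia.
  have := colE; have := col_succ_le; rewrite s1.
  case: (eqVneq j 1) => [->|j_neq1]; first lia.
  by have := leq_col l (_ : 2 <= j); lia.
case: (eqVneq i r) => [->|Ni]; last first.
  by rewrite -ltn_col //; case: (eqVneq j s) => [->|]; lia.
case: (ltngtP j s) => [js|sj|->]; last by lia.
- by have := leq_col l (ltnW js); lia.
- by have := leq_col l (sj : s.+1 <= j); lia.
Qed.

Lemma addable_rem_box : addable (rem_box l s) s.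
Proof.
rewrite /addable; case: eqP => //= s_neq1.
rewrite !col_rem_box ?eqxx 1?(_ : s.-1 == s = false); try lia.
by have := leq_col l (leq_pred s); lia.
Qed.

End RemBox.

Lemma rem_boxK l s : is_partition l -> corner l s -> add_box (rem_box l s) s = l.
Proof.
move=> pl cs; have s_gt0 : 0 < s by case/andP: cs.
have [pr ar] := (rem_box_partition pl cs, addable_rem_box pl cs).
apply: partition_col_inj => //; first exact: add_box_partition.
move=> j j_gt0; rewrite col_add_box // col_rem_box //.
by case: eqP => [->|_]; case/andP: cs; lia.
Qed.

Lemma add_boxK l s : is_partition l -> 0 < s -> addable l s ->
  rem_box (add_box l s) s = l.
Proof.
move=> pl s_gt0 al; have [pa ca] := (add_box_partition pl s_gt0 al, corner_add_box pl s_gt0 al).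
apply: partition_col_inj => //; first exact: rem_box_partition.
by move=> j j_gt0; rewrite col_rem_box // col_add_box // addnK.
Qed.

Lemma psize_rem_box l s : is_partition l -> corner l s -> psize l = (psize (rem_box l s)).+1.
Proof.
move=> pl cs; have s_gt0 : 0 < s by case/andP: cs.
rewrite -{1}(rem_boxK pl cs) psize_add_box //.
- exact: rem_box_partition.
- exact: addable_rem_box.
Qed.

Lemma addable_add_boxE m l s : is_partition m -> is_partition l -> 0 < s ->
  addable m s && (add_box m s == l) = corner l s && (m == rem_box l s).
Proof.
move=> pm pl s_gt0; apply/idP/idP.
- by case/andP=> am /eqP <-; rewrite corner_add_box // add_boxK ?eqxx.
- by case/andP=> cs /eqP ->; rewrite addable_rem_box // rem_boxK ?eqxx.
Qed.

Lemma corner_le_ncols l s : is_partition l -> corner l s -> s <= ncols l.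
Proof. by move=> pl /andP[s_gt0 cs]; rewrite -col_gt0 //; lia. Qed.

Lemma addable_le_ncols l s : is_partition l -> 0 < s -> addable l s -> s <= (ncols l).+1.
Proof.
move=> pl s_gt0; rewrite /addable; case: eqP => [->|s_neq1] //= lt_col.
have : 0 < col l s.-1 by lia.
by rewrite col_gt0 //; lia.
Qed.

Lemma col_not_addable l s : 0 < s -> ~~ addable l s -> col l s = col l s.-1.
Proof.
move=> s_gt0; rewrite negb_or -leqNgt => /andP[_ le_col].
by have := leq_col l (leq_pred s); lia.
Qed.

Lemma col_not_corner l s : 0 < s -> ~~ corner l s -> col l s.+1 = col l s.
Proof.
move=> s_gt0; rewrite /corner s_gt0 -leqNgt => le_col.
by have := leq_col l (leqnSn s); lia.
Qed.

Lemma col1_gt0 l : is_partition l -> 0 < psize l -> 0 < col l 1.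
Proof. by move=> pl; rewrite col1E //; case: l {pl}. Qed.

Lemma mult_col l i : mult l i = col l i - col l i.+1.
Proof.
rewrite /mult /col; elim: l => [//|a l IHl] /=.
have := leq_col l (leqnSn i); rewrite /col IHl.
by case: (ltngtP a i) => /=; lia.
Qed.

Local Open Scope classical_set_scope.
Local Open Scope ring_scope.

Lemma prod_nat_if_eq (R : pzSemiRingType) (j n : nat) (c : R) :
  \prod_(1 <= i < n.+1) (if i == j then c else 1) = if (1 <= j <= n)%N then c else 1.
Proof.
elim: n => [|n IHn]; first by rewrite big_nil; case: j.
rewrite big_nat_recr //= IHn; case: (eqVneq n.+1 j) => [<-|Nj].
  by rewrite ltnn andbF leqnn /= mul1r.
by rewrite mulr1 (_ : (j <= n.+1)%N = (j <= n)%N) //; lia.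
Qed.

Lemma sum_add_box (R : comPzSemiRingType) (f : nat -> R) m l :
  is_partition m -> is_partition l ->
  (forall s, (0 < s)%N -> ~~ addable m s -> f s = 0) ->
  \sum_(s <- iota 1 (ncols m).+1) f s * (add_box m s == l)%:R =
  \sum_(s <- iota 1 (ncols l)) (corner l s)%:R * (m == rem_box l s)%:R * f s.
Proof.
move=> pm pl f0.
transitivity (\sum_(s <- iota 1 ((ncols m).+1 + ncols l))
    (addable m s && (add_box m s == l))%:R * f s).
  rewrite iotaD big_cat [X in _ = _ + X]big1_seq ?addr0.
  - apply: eq_big_seq => s; rewrite mem_iota => /andP[s_gt0 _].
    have [am|nam] := boolP (addable m s); first by rewrite mulrC.
    by rewrite f0 // !mul0r.
  - move=> s /andP[_]; rewrite mem_iota => /andP[s_gt _].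
    have [am|] := boolP (addable m s); last by rewrite mul0r.
    by exfalso; have := addable_le_ncols pm (_ : 0 < s)%N am; lia.
rewrite addnC iotaD big_cat [X in _ + X = _]big1_seq ?addr0.
- apply: eq_big_seq => s; rewrite mem_iota => /andP[s_gt0 _].
  rewrite addable_add_boxE //.
  by case: (corner l s); case: (m == rem_box l s); rewrite ?mul1r ?mul0r.
- move=> s /andP[_]; rewrite mem_iota => /andP[s_gt _].
  rewrite addable_add_boxE //; last by lia.
  have [cs|] := boolP (corner l s); last by rewrite mul0r.
  by exfalso; have := corner_le_ncols pl cs; lia.
Qed.

Section AffineYTA.
Variables (R : realType) (q u : R).
Hypotheses (q_gt1 : 1 < q) (u_gt0 : 0 < u) (u_lt1 : u < 1).

Let q_gt0 : 0 < q. Proof. exact: lt_trans ltr01 q_gt1. Qed.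
Let u_neq0 : u != 0. Proof. by rewrite gt_eqF. Qed.

Lemma qX_gt0 n : 0 < q ^+ n. Proof. exact: exprn_gt0. Qed.
Lemma qX_neq0 n : q ^+ n != 0. Proof. by rewrite gt_eqF ?qX_gt0. Qed.
Lemma qX_gt1 n : (0 < n)%N -> 1 < q ^+ n. Proof. by move=> n_gt0; rewrite exprn_egt1 // -lt0n. Qed.

Lemma qXB1_neq0 N : (0 < N)%N -> q ^+ N - 1 != 0.
Proof. by move=> N_gt0; rewrite subr_eq0 gt_eqF ?qX_gt1. Qed.

Lemma qpoch_gt0 m : 0 < qpoch q m.
Proof.
rewrite /qpoch big_nat_cond; apply: prodr_gt0 => i /andP[/andP[i_gt0 _] _].
by rewrite subr_gt0 invf_lt1 ?qX_gt0 ?qX_gt1.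
Qed.

Lemma qpochS m : qpoch q m.+1 = qpoch q m * (1 - (q ^+ m.+1)^-1).
Proof. by rewrite /qpoch big_nat_recr. Qed.

Definition qfalling (N k : nat) : R := \prod_(j < k) (1 - (q ^+ (N - j))^-1).

Lemma qfallingS N k : qfalling N k.+1 = qfalling N k * (1 - (q ^+ (N - k))^-1).
Proof. by rewrite /qfalling big_ord_recr. Qed.

Lemma qfalling_eq0 N k : (N < k)%N -> qfalling N k = 0.
Proof.
move=> /subnKC <-; rewrite /qfalling (bigD1 (Ordinal (ltn_addr _ (ltnSn N)))) //=.
by rewrite subnn expr0 invr1 subrr mul0r.
Qed.

Lemma qfalling_pred N k : (0 < N)%N ->
  qfalling N.-1 k * (q ^+ N - 1) = qfalling N k * (q ^+ N - q ^+ k).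
Proof.
move=> N_gt0; elim: k => [|k IHk]; first by rewrite /qfalling !big_ord0 expr0.
rewrite !qfallingS mulrAC IHk -!mulrA; congr (_ * _).
have [kN|Nk] := ltnP k N; last first.
  have [-> ->] : (N.-1 - k = 0 /\ N - k = 0)%N by lia.
  by rewrite expr0 invr1 subrr mulr0 mul0r.
have [e -> ->] : exists2 e, (N.-1 - k = e)%N & N = (e + k).+1 by exists (N.-1 - k)%N; lia.
rewrite subSn ?leq_addl // addnK !exprS exprD.
by field; rewrite (gt_eqF q_gt0) qX_neq0.
Qed.

Lemma qfalling_shift N k :
  (q ^+ N / q ^+ k - 1) * qfalling N k = q ^+ N / q ^+ k * qfalling N k.+1.
Proof.
rewrite qfallingS; have [kN|Nk] := ltnP k N.
  have -> : N = (N - k + k)%N by rewrite subnK // ltnW.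
  rewrite exprD mulfK ?qX_neq0 // addnK.
  by have := qX_neq0 (N - k) => ?; field.
rewrite (_ : N - k = 0)%N ?expr0 ?invr1 ?subrr ?mulr0; last by lia.
have [->|Nk'] := eqVneq N k; first by rewrite mulfV ?qX_neq0 // subrr mul0r.
by rewrite qfalling_eq0 ?mulr0 //; lia.
Qed.

Definition Nuq_factor (l : seq nat) (i : nat) : R :=
  q ^+ (col l i ^ 2) * qpoch q (col l i - col l i.+1).
Definition Nuq_denom (l : seq nat) : R := \prod_(1 <= i < (ncols l).+1) Nuq_factor l i.
Definition Nuq_weight (l : seq nat) : R := u ^+ psize l / Nuq_denom l.

Lemma Nuq_denom_gt0 l : 0 < Nuq_denom l.
Proof. by apply: prodr_gt0 => i _; rewrite mulr_gt0 ?qX_gt0 ?qpoch_gt0. Qed.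

Lemma Nuq_denom_neq0 l : Nuq_denom l != 0.
Proof. by rewrite gt_eqF ?Nuq_denom_gt0. Qed.

Lemma Nuq_denom_widen l n : is_partition l -> (ncols l <= n)%N ->
  Nuq_denom l = \prod_(1 <= i < n.+1) Nuq_factor l i.
Proof.
move=> pl ln; have ln' : ((ncols l).+1 <= n.+1)%N by [].
rewrite /Nuq_denom [RHS](big_cat_nat (n := (ncols l).+1) _ ln') //=.
rewrite [X in _ * X]big_nat_cond [X in _ * X]big1 ?mulr1 // => i /andP[/andP[li _] _].
have li' : (ncols l < i.+1)%N by apply: ltnW.
by rewrite /Nuq_factor (col_gt_ncols pl li) (col_gt_ncols pl li') mul1r /qpoch big_nil.
Qed.

Lemma NuqE l : (0 < psize l)%N ->
  Nuq q u l = inf_prod q u * Nuq_weight l * (q ^+ col l 1 - 1) / u.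
Proof.
move=> l_gt0; rewrite /Nuq.
have -> : \prod_(1 <= i < (ncols l).+1) (q ^+ (col l i ^ 2) * qpoch q (mult l i)) = Nuq_denom l.
  by apply: eq_bigr => i _; rewrite mult_col.
rewrite /Nuq_weight -(prednK l_gt0) exprS /=.
by field; rewrite u_neq0 Nuq_denom_neq0.
Qed.

Section RemBoxWeights.
Variables (l : seq nat) (s : nat).
Hypotheses (pl : is_partition l) (cs : corner l s).

Let s_gt0 : (0 < s)%N. Proof. by case/andP: cs. Qed.
Let c := col l s.
Let c_gt0 : (0 < c)%N. Proof. by case/andP: cs; rewrite /c; lia. Qed.

(* Removing the box divides the factor of column [s] by [gain_col] and, as [m_(s-1)] grows by one,
   multiplies the factor of column [s-1] by [gain_prev]. *)
Let gain_col : R := q ^+ (2 * c).-1 * (1 - (q ^+ (c - col l s.+1))^-1).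
Let gain_prev : R := 1 - (q ^+ (col l s.-1 - c).+1)^-1.

Lemma Nuq_factor_rem_box i : (0 < i)%N ->
  Nuq_factor (rem_box l s) i * (if i == s then gain_col else 1) =
  Nuq_factor l i * (if i == s.-1 then gain_prev else 1).
Proof.
move=> i_gt0; rewrite /Nuq_factor !col_rem_box //.
have [->|Nis] := eqVneq i s.
  rewrite (gtn_eqF (ltnSn s)) (_ : s == s.-1 = false) ?subn0 ?mulr1 /gain_col -/c; last by lia.
  have [K cE] : exists K, c = K.+1 by exists c.-1; rewrite prednK.
  have le_K : (col l s.+1 <= K)%N by case/andP: cs; rewrite -/c cE.
  rewrite cE subn1 succnK (_ : K.+1 - col l s.+1 = (K - col l s.+1).+1)%N; last by lia.
  rewrite qpochS (_ : K.+1 ^ 2 = K ^ 2 + (2 * K.+1).-1)%N ?exprD; first by ring.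
  by rewrite !expnS expn0; lia.
rewrite subn0 mulr1; have [Eis|Nis1] := eqVneq i s.-1; last first.
  by rewrite (_ : i.+1 == s = false) ?subn0 ?mulr1 //; lia.
subst i; have le_col : (c <= col l s.-1)%N by apply: leq_col; lia.
rewrite prednK // eqxx /gain_prev -/c subn1.
by rewrite (_ : col l s.-1 - c.-1 = (col l s.-1 - c).+1)%N ?qpochS ?mulrA //; lia.
Qed.

Lemma Nuq_denom_rem_box :
  Nuq_denom (rem_box l s) * gain_col = Nuq_denom l * (if (1 < s)%N then gain_prev else 1).
Proof.
have pr := rem_box_partition pl cs; have s_le := corner_le_ncols pl cs.
have le_ncols : (ncols (rem_box l s) <= ncols l)%N.
  case E: (ncols (rem_box l s)) => [//|k].
  have : (0 < col (rem_box l s) k.+1)%N by rewrite col_gt0 // E.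
  by rewrite col_rem_box // -col_gt0 //; lia.
rewrite (Nuq_denom_widen pr le_ncols) (Nuq_denom_widen pl (leqnn _)).
have := prod_nat_if_eq s (ncols l) gain_col; rewrite s_gt0 s_le /= => <-.
have := prod_nat_if_eq s.-1 (ncols l) gain_prev.
rewrite (_ : (1 <= s.-1 <= ncols l)%N = (1 < s)%N) => [<-|]; last by lia.
by rewrite -!big_split; apply: eq_big_nat => i /andP[i_gt0 _]; apply: Nuq_factor_rem_box.
Qed.

Lemma step2_colprob_rem_box :
  step2_colprob q (rem_box l s) s = (q ^+ c.-1)^-1 * (if (1 < s)%N then gain_prev else 1).
Proof.
rewrite /step2_colprob /gain_prev; case: ifP => [/eqP s1|/negbT s_neq1].
  have E1 : (1 == s) = true by rewrite s1.
  by rewrite col_rem_box // E1 subn1 /c s1 /= mulr1.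
have s_gt1 : (1 < s)%N by lia.
have le_col : (c <= col l s.-1)%N by apply: leq_col; lia.
have s1_gt0 : (0 < s.-1)%N by lia.
rewrite !col_rem_box // eqxx (_ : s.-1 == s = false) ?subn0 ?subn1 ?s_gt1; last by lia.
rewrite -/c {1}(_ : col l s.-1 = c.-1 + (col l s.-1 - c).+1)%N ?exprD ?invfM; last by lia.
by rewrite mulrBr mulr1.
Qed.

Lemma Nuq_weight_rem_box :
  Nuq_weight (rem_box l s) * step2_colprob q (rem_box l s) s =
  Nuq_weight l / u * (q ^+ c - q ^+ col l s.+1).
Proof.
have gainE : (q ^+ c.-1)^-1 * gain_col = q ^+ c - q ^+ col l s.+1.
  have le_col : (col l s.+1 <= c)%N by apply: leq_col.
  rewrite /gain_col (_ : (2 * c).-1 = c.-1 + c)%N; last by lia.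
  rewrite exprD -mulrA mulKf ?qX_neq0 // -(subnK le_col) addnK exprD.
  by field; rewrite qX_neq0.
have prevE : (if (1 < s)%N then gain_prev else 1) =
    Nuq_denom (rem_box l s) * gain_col / Nuq_denom l.
  by rewrite Nuq_denom_rem_box mulrC mulKf ?Nuq_denom_neq0.
rewrite step2_colprob_rem_box prevE -gainE /Nuq_weight (psize_rem_box pl cs) exprS.
by field; rewrite u_neq0 !Nuq_denom_neq0 ?qX_neq0.
Qed.

End RemBoxWeights.

(** * The law of Step 1 *)

Definition tails (N : nat) : R := \prod_(1 <= r < N) (1 - coin q u r).

Definition state_prob (N : nat) (l : seq nat) : R :=
  tails N * qfalling N (col l 1) * Nuq_weight l.

Lemma state_prob_N0 l : is_partition l -> (0 < psize l)%N -> state_prob 0 l = 0.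
Proof. by move=> pl l_gt0; rewrite /state_prob qfalling_eq0 ?col1_gt0 // mulr0 mul0r. Qed.

Lemma yta_colprob_step2 N m s : is_partition m -> (0 < s)%N -> addable m s ->
  yta_colprob q N m s * qfalling N (col m 1) =
  q ^+ N / (q ^+ N - 1) * step2_colprob q m s * qfalling N (col (add_box m s) 1).
Proof.
move=> pm s_gt0 am; rewrite col_add_box // /yta_colprob /step2_colprob.
have [s1|s_neq1] := eqVneq s 1%N; last by rewrite addn0; ring.
by rewrite addn1 mulrAC qfalling_shift; ring.
Qed.

Lemma corner_transition N l s : is_partition l -> corner l s -> (0 < N)%N ->
  coin q u N * yta_colprob q N (rem_box l s) s * state_prob N (rem_box l s) =
  state_prob N l * (q ^+ col l s - q ^+ col l s.+1) / (q ^+ N - 1).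
Proof.
move=> pl cs N_gt0; have s_gt0 : (0 < s)%N by case/andP: cs.
have pr := rem_box_partition pl cs; have ar := addable_rem_box pl cs.
rewrite /state_prob /coin.
transitivity (u / q ^+ N * (yta_colprob q N (rem_box l s) s * qfalling N (col (rem_box l s) 1)) *
  tails N * Nuq_weight (rem_box l s)); first by ring.
rewrite yta_colprob_step2 // rem_boxK //.
transitivity (u / (q ^+ N - 1) * (q ^+ N / q ^+ N) * tails N * qfalling N (col l 1) *
  (Nuq_weight (rem_box l s) * step2_colprob q (rem_box l s) s)); first by ring.
rewrite Nuq_weight_rem_box // divff ?qX_neq0 //.
by field; rewrite u_neq0 qXB1_neq0.
Qed.

Lemma sum_col_diff l : is_partition l ->
  \sum_(s <- iota 1 (ncols l)) (q ^+ col l s - q ^+ col l s.+1) = q ^+ col l 1 - 1.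
Proof.
move=> pl.
have -> : iota 1 (ncols l) = index_iota 1 (ncols l).+1 by rewrite /index_iota subSS subn0.
have := telescope_sumr (fun k => q ^+ col l k) (ltn0Sn (ncols l)).
rewrite /= col_gt_ncols // expr0 -(opprB 1) => <-.
by rewrite -sumrN; apply: eq_bigr => s _; rewrite opprB.
Qed.

Lemma state_prob_rec N l : is_partition l -> (0 < N)%N -> (1 < N + psize l)%N ->
  state_prob N l = (1 - coin q u N.-1) * state_prob N.-1 l +
    \sum_(s <- iota 1 (ncols l)) (corner l s)%:R *
      (coin q u N * yta_colprob q N (rem_box l s) s) * state_prob N (rem_box l s).
Proof.
move=> pl N_gt0 size_gt1.
have -> : \sum_(s <- iota 1 (ncols l)) (corner l s)%:R *
      (coin q u N * yta_colprob q N (rem_box l s) s) * state_prob N (rem_box l s) =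
    state_prob N l * (q ^+ col l 1 - 1) / (q ^+ N - 1).
  rewrite -sum_col_diff // mulr_sumr mulr_suml; apply: eq_big_seq => s.
  rewrite mem_iota => /andP[s_gt0 _]; have [cs|ncs] := boolP (corner l s).
    by rewrite mul1r corner_transition.
  by rewrite col_not_corner // subrr mulr0 mul0r !mul0r.
have -> : (1 - coin q u N.-1) * state_prob N.-1 l =
    tails N * qfalling N.-1 (col l 1) * Nuq_weight l.
  rewrite /state_prob; have [N1|N_gt1] := eqVneq N 1%N.
    have col1_pos : (0 < col l 1)%N by apply: col1_gt0 => //; lia.
    by rewrite N1 qfalling_eq0 // !(mulr0, mul0r).
  by rewrite /tails -(prednK N_gt0) big_nat_recr /=; [ring | lia].
have := qfalling_pred (col l 1) N_gt0; rewrite /state_prob => qfE.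
rewrite (_ : qfalling N.-1 _ = qfalling N (col l 1) * (q ^+ N - q ^+ col l 1) / (q ^+ N - 1)).
  by field; rewrite qXB1_neq0.
by rewrite -qfE mulfK ?qXB1_neq0.
Qed.

Definition yta_expect (t : nat) (F : nat * seq nat -> R) : R :=
  \sum_(x <- yta_dist q u t) x.2 * F x.1.

Lemma yta_expect0 F : yta_expect 0 F = F (1%N, [::]).
Proof. by rewrite /yta_expect big_seq1 mul1r. Qed.

Lemma yta_expectS t F : yta_expect t.+1 F = yta_expect t (fun y =>
  (1 - coin q u y.1) * F (y.1.+1, y.2) +
  \sum_(s <- iota 1 (ncols y.2).+1)
    coin q u y.1 * yta_colprob q y.1 y.2 s * F (y.1, add_box y.2 s)).
Proof.
rewrite /yta_expect [yta_dist _ _ _]/= big_flatten big_map; apply: eq_bigr => -[[N l] w] _ /=.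
rewrite !big_cons big_map /= [RHS]mulrDr [X in _ = _ + X]mulrDr mulr_sumr !mulrA.
by congr (_ + (_ + _)); apply: eq_bigr => s _; rewrite !mulrA.
Qed.

Lemma yta_expectD t F G :
  yta_expect t (fun y => F y + G y) = yta_expect t F + yta_expect t G.
Proof. by rewrite /yta_expect -big_split; apply: eq_bigr => x _; rewrite mulrDr. Qed.

Lemma yta_expectZ t a F : yta_expect t (fun y => a * F y) = a * yta_expect t F.
Proof. by rewrite /yta_expect mulr_sumr; apply: eq_bigr => x _; rewrite mulrCA. Qed.

Lemma yta_expect_sum t (r : seq nat) (F : nat -> nat * seq nat -> R) :
  yta_expect t (fun y => \sum_(s <- r) F s y) = \sum_(s <- r) yta_expect t (F s).
Proof. by rewrite /yta_expect exchange_big; apply: eq_bigr => x _; rewrite mulr_sumr. Qed.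

Lemma yta_expect_cst0 t : yta_expect t (fun _ => 0) = 0.
Proof. by rewrite /yta_expect big1 // => x _; rewrite mulr0. Qed.

Lemma yta_colprob_not_addable N l s : (0 < s)%N -> ~~ addable l s -> yta_colprob q N l s = 0.
Proof.
move=> s_gt0 nal; have s_neq1 : s != 1%N by apply: contraNneq nal => ->.
by rewrite /yta_colprob (negbTE s_neq1) col_not_addable // subrr mul0r.
Qed.

Lemma step2_colprob_not_addable l s : (0 < s)%N -> ~~ addable l s -> step2_colprob q l s = 0.
Proof.
move=> s_gt0 nal; have s_neq1 : s != 1%N by apply: contraNneq nal => ->.
by rewrite /step2_colprob (negbTE s_neq1) col_not_addable // subrr.
Qed.

(* [yta_step] also lists non-addable columns, with weight 0 but a junk [add_box]. *)
Lemma yta_dist_support t x : x \in yta_dist q u t -> x.2 != 0 ->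
  [/\ is_partition x.1.2, (x.1.1 + psize x.1.2 = t.+1)%N & (0 < x.1.1)%N].
Proof.
elim: t x => [|t IHt] x; first by rewrite inE => /eqP ->.
move=> /flattenP[ys /mapP[[[N l] w] xt ->]]; rewrite in_cons => /predU1P[->|].
  move=> /= xw; have w_neq0 : w != 0 by apply: contraNneq xw => ->; rewrite mul0r.
  by have /= [pl sz N_gt0] := IHt _ xt w_neq0; split=> //=; lia.
move=> /mapP[s]; rewrite mem_iota => /andP[s_gt0 _] -> /= xw.
have w_neq0 : w != 0 by apply: contraNneq xw => ->; rewrite !mul0r.
have /= [pl sz N_gt0] := IHt _ xt w_neq0.
have al : addable l s by apply: contraNT xw => /(yta_colprob_not_addable N s_gt0) ->; rewrite mulr0.
by split=> //=; [apply: add_box_partition | rewrite psize_add_box //=; lia].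
Qed.

Lemma eq_yta_expect t F G :
  (forall N l, is_partition l -> (N + psize l = t.+1)%N -> (0 < N)%N -> F (N, l) = G (N, l)) ->
  yta_expect t F = yta_expect t G.
Proof.
move=> FG; apply: eq_big_seq => -[[N l] w] xt.
have [->|w_neq0] := eqVneq w 0; first by rewrite !mul0r.
by have [pl sz N_gt0] := yta_dist_support xt w_neq0; rewrite /= FG.
Qed.

Definition yta_state_prob (t N : nat) (l : seq nat) : R := yta_expect t (fun y => (y == (N, l))%:R).

Lemma yta_state_prob_N0 t l : yta_state_prob t 0 l = 0.
Proof.
rewrite -(yta_expect_cst0 t); apply: eq_yta_expect => M m _ _ M_gt0.
by rewrite xpair_eqE gtn_eqF.
Qed.

Lemma yta_state_probS t N l : is_partition l -> (0 < N)%N ->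
  yta_state_prob t.+1 N l = (1 - coin q u N.-1) * yta_state_prob t N.-1 l +
    \sum_(s <- iota 1 (ncols l)) (corner l s)%:R *
      (coin q u N * yta_colprob q N (rem_box l s) s) * yta_state_prob t N (rem_box l s).
Proof.
move=> pl N_gt0; rewrite /yta_state_prob yta_expectS.
rewrite (eq_yta_expect (G := fun y => (1 - coin q u N.-1) * (y == (N.-1, l))%:R +
  \sum_(s <- iota 1 (ncols l)) (corner l s)%:R *
    (coin q u N * yta_colprob q N (rem_box l s) s) * (y == (N, rem_box l s))%:R)).
  rewrite yta_expectD yta_expectZ yta_expect_sum; congr (_ + _).
  by apply: eq_bigr => s _; rewrite yta_expectZ.
move=> M m pm _ _ /=; congr (_ + _).
  rewrite !xpair_eqE (_ : (M.+1 == N) = (M == N.-1)); last by lia.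
  by case: eqP => [->|_]; rewrite /= ?mulr0.
under eq_bigr do rewrite xpair_eqE; under [in RHS]eq_bigr do rewrite xpair_eqE.
have [->|MN] := eqVneq M N; last by rewrite !big1 // => s _; rewrite mulr0.
rewrite (sum_add_box pm pl) => [|s s_gt0 nam]; last by rewrite yta_colprob_not_addable ?mulr0.
by apply: eq_bigr => s _; case: eqP => [->|_]; rewrite ?mulr1 ?mulr0 ?mul0r.
Qed.

Lemma yta_state_probE t N l : is_partition l -> (N + psize l = t.+1)%N ->
  yta_state_prob t N l = state_prob N l.
Proof.
elim: t N l => [|t IHt] N l pl sz.
  rewrite /yta_state_prob yta_expect0; case: N sz => [|[|N]] sz; last by lia.
    by rewrite state_prob_N0 //; lia.
  have -> : l = [::].
    by case: l pl sz => // a l /andP[_ /andP[a_gt0 _]]; rewrite /psize /= => sz; exfalso; lia.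
  rewrite eqxx /state_prob /tails /qfalling /Nuq_weight /Nuq_denom.
  by rewrite !big_geq // big_ord0 divr1 !mul1r.
have [N0|N_gt0] := posnP N.
  by rewrite N0 yta_state_prob_N0 state_prob_N0 //; lia.
rewrite yta_state_probS // state_prob_rec //; last by lia.
rewrite IHt //; last by lia.
congr (_ + _); apply: eq_big_seq => s; rewrite mem_iota => /andP[s_gt0 _].
have [cs|] := boolP (corner l s); last by rewrite !mul0r.
rewrite IHt //; first exact: rem_box_partition.
by move: sz; rewrite (psize_rem_box pl cs); lia.
Qed.

Lemma ayta_prob_corners t nu : is_partition nu -> (psize nu <= t.+1)%N ->
  ayta_prob q u t nu = \sum_(s <- iota 1 (ncols nu)) (corner nu s)%:R *
    step2_colprob q (rem_box nu s) s * state_prob (t.+1 - psize (rem_box nu s)) (rem_box nu s).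
Proof.
move=> pnu nu_le.
have -> : ayta_prob q u t nu = yta_expect t (fun y =>
    \sum_(s <- iota 1 (ncols y.2).+1) step2_colprob q y.2 s * (add_box y.2 s == nu)%:R).
  rewrite /ayta_prob /yta_expect; apply: eq_bigr => x _; rewrite mulr_sumr.
  by apply: eq_bigr => s _; ring.
rewrite (eq_yta_expect (G := fun y => \sum_(s <- iota 1 (ncols nu)) (corner nu s)%:R *
    step2_colprob q (rem_box nu s) s * (y.2 == rem_box nu s)%:R)).
  rewrite yta_expect_sum; apply: eq_big_seq => s; rewrite mem_iota => /andP[s_gt0 _].
  rewrite yta_expectZ; have [cs|] := boolP (corner nu s); last by rewrite !mul0r.
  have pr := rem_box_partition pnu cs; have nu_rem := psize_rem_box pnu cs.
  rewrite -(yta_state_probE (t := t)) //; last by lia.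
  congr (_ * _); apply: eq_yta_expect => M m pm sz _ /=; rewrite xpair_eqE.
  have [mE|] := eqVneq m (rem_box nu s); last by rewrite andbF.
  by rewrite (_ : M == _) //; move: sz; rewrite mE; lia.
move=> M m pm _ _ /=; rewrite (sum_add_box pm pnu) => [|s s_gt0 nam]; last first.
  by rewrite step2_colprob_not_addable.
by apply: eq_bigr => s _; case: eqP => [->|_]; rewrite ?mulr1 ?mulr0 ?mul0r.
Qed.

(** * Passage to the limit *)

Let coin_le1 r : (0 < r)%N -> 0 <= 1 - coin q u r <= 1.
Proof.
move=> r_gt0; apply/andP; split; last by rewrite gerBl divr_ge0 ?ltW ?qX_gt0.
by rewrite subr_ge0 ler_pdivrMr ?qX_gt0 // mul1r ltW // (lt_trans u_lt1) // qX_gt1.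
Qed.

Lemma cvg_tails : tails @ \oo --> inf_prod q u.
Proof.
have tails_ge0 N : 0 <= tails N.
  rewrite /tails big_nat_cond; apply: prodr_ge0 => r /andP[/andP[r_gt0 _] _].
  by case/andP: (coin_le1 r_gt0).
rewrite -cvg_shiftS; apply: nonincreasing_is_cvgn; last by exists 0 => _ [n _ <-]; apply: tails_ge0.
have tailsS N : tails N.+2 = tails N.+1 * (1 - coin q u N.+1) by rewrite /tails big_nat_recr.
apply/nonincreasing_seqP => n /=; rewrite tailsS; apply: ler_piMr; first exact: tails_ge0.
by case/andP: (coin_le1 (ltn0Sn n)).
Qed.

Lemma cvg_qfalling k : (fun N => qfalling N k) @ \oo --> (1 : R).
Proof.
have qV_lt1 : `|q^-1| < 1 by rewrite ger0_norm ?invr_ge0 ?ltW // invf_lt1.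
have qVX0 j : (fun N => (q ^+ (N - j))^-1) @ \oo --> (0 : R).
  under eq_fun do rewrite -exprVn.
  exact: cvg_comp (cvg_subnr j) (cvg_expr qV_lt1).
elim: k => [|k IHk].
  by under eq_fun do rewrite /qfalling big_ord0; apply: cvg_cst.
have lim1 := cvgM IHk (cvgB (cvg_cst (1 : R)) (qVX0 k)); rewrite subr0 mulr1 in lim1.
by under eq_fun do rewrite qfallingS; exact: lim1.
Qed.

Lemma cvg_state_prob l : (fun N => state_prob N l) @ \oo --> inf_prod q u * Nuq_weight l.
Proof.
have lim := cvgM (cvgM cvg_tails (cvg_qfalling (col l 1))) (cvg_cst (Nuq_weight l)).
by rewrite mulr1 in lim; exact: lim.
Qed.

Lemma Nuq_corners nu : is_partition nu -> (0 < psize nu)%N ->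
  \sum_(s <- iota 1 (ncols nu)) (corner nu s)%:R * step2_colprob q (rem_box nu s) s *
    (inf_prod q u * Nuq_weight (rem_box nu s)) = Nuq q u nu.
Proof.
move=> pnu nu_gt0; rewrite NuqE // -sum_col_diff // mulr_sumr mulr_suml.
apply: eq_big_seq => s; rewrite mem_iota => /andP[s_gt0 _].
have [cs|ncs] := boolP (corner nu s); last by rewrite col_not_corner // subrr mulr0 !mul0r.
transitivity (inf_prod q u * (Nuq_weight (rem_box nu s) * step2_colprob q (rem_box nu s) s)).
  by rewrite mul1r; ring.
by rewrite Nuq_weight_rem_box //; field.
Qed.

End AffineYTA.

Theorem theorem3p6 (R : realType) (q u : R) (hq : 1 < q) (hu0 : 0 < u) (hu1 : u < 1)
  (nu : seq nat) (hnu : is_partition nu) (hpos : (0 < psize nu)%N) :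
  (fun t => ayta_prob q u t nu) @ \oo --> Nuq q u nu.
Proof.
rewrite -Nuq_corners //.
set F := fun s t => (corner nu s)%:R * step2_colprob q (rem_box nu s) s *
  state_prob q u (t.+1 - psize (rem_box nu s)) (rem_box nu s).
have late : \forall t \near \oo, \sum_(s <- iota 1 (ncols nu)) F s t = ayta_prob q u t nu.
  near=> t; rewrite ayta_prob_corners //; near: t.
  by exists (psize nu) => // t /= /leqW.
apply: cvg_trans (near_eq_cvg late) _.
apply: cvg_big => // [|s _]; first exact: add_continuous.
apply: cvgM; first exact: cvg_cst.
have to_oo : (fun t => (t.+1 - psize (rem_box nu s))%N) @ \oo --> \oo.
  exact: cvg_comp (cvg_addnl 1) (cvg_subnr _).
exact: cvg_comp to_oo (@cvg_state_prob _ _ _ hq hu0 hu1 _).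
Unshelve. all: by end_near.
Qed.
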